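(* Let $k=2m+1$, $l=2n+1$ be odd integers and let $V(k,l)\subset\mathbb C^3(x,y,z)$ be the vanishing set of $S_n(t)S_{m-1}(z)-S_{n-1}(t)S_m(z)$, where $t=\left( xS_m(z)-yS_{m-1}(z) \right)\left( yS_m(z)-xS_{m-1}(z) \right)-z\left(S^2_m(z)+S^2_{m-1}(z)\right)+4S_m(z)S_{m-1}(z)$. Then on $V(k,l)$, $S_m^2(z)-S_{m-1}^2(z)=0$ only for a set of codimension one.
   Context: The Chebyshev polynomials $S_j(\omega)$ are defined for all integers $j$ by $S_0=1$, $S_1=\omega$, $S_{j+1}=\omega S_j-S_{j-1}$. $V(k,l)$ is a surface (dimension two), a natural model of the closure of the irreducible characters of the double twist link $J(k,l)$. *)

From HB Require Import structures.
From mathcomp Require Import all_boot all_order all_algebra.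
Set Implicit Arguments. Unset Strict Implicit. Unset Printing Implicit Defensive.
Import Order.TTheory GRing.Theory Num.Theory.
Local Open Scope ring_scope.

(* Chebyshev polynomials S_j evaluated at w, for j : nat:
   S_0 = 1, S_1 = w, S_{j+2} = w S_{j+1} - S_j. *)
Fixpoint chebS_nat (C : nzRingType) (j : nat) (w : C) : C * C :=
  (* returns (S_j, S_{j+1}) *)
  match j with
  | 0%N => (1, w)
  | j'.+1 => let p := chebS_nat j' w in (p.2, w * p.2 - p.1)
  end.

(* Extension to all integers via the same recurrence:
   S_{-1} = 0 and S_{-(j+2)} = - S_j. *)
Definition chebS (C : nzRingType) (j : int) (w : C) : C :=
  match j with
  | Posz j' => (chebS_nat j' w).1
  | Negz 0 => 0
  | Negz j'.+1 => - (chebS_nat j' w).1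
  end.

Definition tV (C : nzRingType) (m : int) (x y z : C) : C :=
  (x * chebS m z - y * chebS (m - 1) z) * (y * chebS m z - x * chebS (m - 1) z)
  - z * (chebS m z ^+ 2 + chebS (m - 1) z ^+ 2)
  + 4%:R * chebS m z * chebS (m - 1) z.

Definition Vkl (C : nzRingType) (m n : int) (x y z : C) : Prop :=
  chebS n (tV m x y z) * chebS (m - 1) z - chebS (n - 1) (tV m x y z) * chebS m z = 0.

(* Evaluation of a bivariate polynomial p(a,b) in {poly {poly C}}:
   the outer variable is b, the inner one a. *)
Definition eval2 (C : nzRingType) (p : {poly {poly C}}) (a b : C) : C :=
  (p.[b%:P]).[a].

(* A subset A of C^3 has dimension at most one (transcendence-degree
   definition): any two of the coordinate functions are algebraically
   dependent on A, i.e. each coordinate projection of A to C^2 lies on a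
   plane curve. *)
Definition dim_le1 (C : nzRingType) (A : C -> C -> C -> Prop) : Prop :=
  (exists p : {poly {poly C}}, p != 0 /\ forall x y z, A x y z -> eval2 p x y = 0) /\
  (exists p : {poly {poly C}}, p != 0 /\ forall x y z, A x y z -> eval2 p x z = 0) /\
  (exists p : {poly {poly C}}, p != 0 /\ forall x y z, A x y z -> eval2 p y z = 0).

From mathcomp Require Import all_boot all_order all_algebra.
From mathcomp Require Import ring zify.
Set Implicit Arguments.
Unset Strict Implicit.
Unset Printing Implicit Defensive.
Import GRing.Theory Num.Theory.
Local Open Scope ring_scope.

(* The condition [S_m(z)^2 = S_{m-1}(z)^2] is a nonzero polynomial equation in
   [z] alone (at [z = 2] the difference of the two sides is [2m+1]), so it
   confines [z] to finitely many values; this handles the projections to the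
   [(x,z)] and [(y,z)] planes.  For the [(x,y)] plane, the identity
   [Q_n(t) S_m^2 = (S_n(t) S_{m-1} - S_{n-1}(t) S_m)(S_n(t) S_{m-1} + S_{n-1}(t) S_m)
      + S_n(t)^2 Q_m], with [Q_j(w) = S_j(w)^2 - S_{j-1}(w)^2], shows that on
   the set in question [Q_n(t(x,y,r)) = 0] for one of the finitely many roots
   [r] of [Q_m], and [S_m(r) <> 0] there.  Each [Q_n(t(x,y,r))] is a nonzero
   polynomial in [(x,y)]: [t(x,0,r)] is a nonconstant quadratic in [x], so it
   takes the value [2], where [Q_n(2) = 2n+1]. *)

Definition chebQ (R : nzRingType) (j : int) (w : R) : R :=
  chebS j w ^+ 2 - chebS (j - 1) w ^+ 2.

Section ChebyshevMorphism.
Variables (R S : nzRingType) (f : {rmorphism R -> S}).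

Lemma rmorph_chebS j w : f (chebS j w) = chebS j (f w).
Proof.
have rmorph_chebS_nat k : f (chebS_nat k w).1 = (chebS_nat k (f w)).1 /\
                          f (chebS_nat k w).2 = (chebS_nat k (f w)).2.
  elim: k => [|k [IH1 IH2]] /=; first by rewrite rmorph1.
  by rewrite rmorphB rmorphM IH1 IH2.
case: j => [k|[|k]] /=; first exact: (rmorph_chebS_nat k).1.
  exact: rmorph0.
by rewrite rmorphN (rmorph_chebS_nat k).1.
Qed.

Lemma rmorph_chebQ j w : f (chebQ j w) = chebQ j (f w).
Proof. by rewrite /chebQ rmorphB !rmorphXn !rmorph_chebS. Qed.

Lemma rmorph_tV m x y z : f (tV m x y z) = tV m (f x) (f y) (f z).
Proof.
by rewrite /tV !(rmorph_nat, rmorphB, rmorphD, rmorphN, rmorphM, rmorphXn, rmorph_chebS).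
Qed.

End ChebyshevMorphism.

Lemma horner_chebQ (R : comNzRingType) j (z : R) : (chebQ j 'X).[z] = chebQ j z.
Proof. by rewrite -{2}(hornerX z); exact: (rmorph_chebQ (horner_eval z)). Qed.

Lemma chebS_nat_two (R : comNzRingType) k :
  chebS_nat k (2%:R : R) = (k.+1%:R, k.+2%:R).
Proof.
elim: k => [|k IH] //=; rewrite IH /=; congr pair.
rewrite -[k.+3]addn3 -[k.+2]addn2 -[k.+1]addn1 !natrD; ring.
Qed.

Lemma chebS_two (R : comNzRingType) j : chebS j (2%:R : R) = (j + 1)%:~R.
Proof.
case: j => [k|[|k]] /=.
- by rewrite chebS_nat_two /= -addn1.
- by rewrite NegzE addrC subrr.
- rewrite chebS_nat_two /= NegzE -[k.+2]addn2 -[k.+1]addn1 !natrD; ring.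
Qed.

Lemma chebQ_two (R : comNzRingType) j : chebQ j (2%:R : R) = (2 * j + 1)%:~R.
Proof. rewrite /chebQ !chebS_two !intrD !intrM; ring. Qed.

Lemma chebQ_two_neq0 (R : numDomainType) j : chebQ j (2%:R : R) != 0.
Proof. by rewrite chebQ_two intr_eq0; apply/eqP; lia. Qed.

Lemma chebS_cassini (R : comNzRingType) j (w : R) :
  chebS j w ^+ 2 - w * chebS j w * chebS (j - 1) w + chebS (j - 1) w ^+ 2 = 1.
Proof.
have cassini_nat k : let p := chebS_nat k w in
    p.1 ^+ 2 - w * p.1 * p.2 + p.2 ^+ 2 = 1.
  by elim: k => [|k IH] /=; [ring | rewrite -IH /=; ring].
case: j => [[|k]|[|k]] /=.
- ring.
- by rewrite subSS subn0 -(cassini_nat k) /=; ring.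
- ring.
- by rewrite addn0 -(cassini_nat k) /=; ring.
Qed.

Lemma chebQ_eq0_chebS_neq0 (R : idomainType) j (w : R) :
  chebQ j w = 0 -> chebS j w != 0 /\ chebS (j - 1) w != 0.
Proof.
move=> /eqP; rewrite subr_eq0 => /eqP sq_eq.
have same_zero : (chebS j w == 0) = (chebS (j - 1) w == 0).
  by rewrite -sqrf_eq0 sq_eq sqrf_eq0.
suff a_neq0 : chebS j w != 0 by rewrite -same_zero.
apply/negP => /eqP a0.
have b0 : chebS (j - 1) w = 0 by apply/eqP; rewrite -same_zero a0.
have := chebS_cassini j w; rewrite a0 b0 expr0n /= !(mulr0, subr0, addr0).
by move/eqP; rewrite eq_sym oner_eq0.
Qed.

Lemma Vkl_chebQ (R : idomainType) m n (x y z : R) :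
  Vkl m n x y z -> chebQ m z = 0 -> chebQ n (tV m x y z) = 0.
Proof.
rewrite /Vkl => hV hQ; have [a_neq0 _] := chebQ_eq0_chebS_neq0 hQ.
move: hV hQ a_neq0; rewrite /chebQ.
set a := chebS m z; set b := chebS (m - 1) z.
set sa := chebS n _; set sb := chebS (n - 1) _ => hV hQ a_neq0.
have : (sa ^+ 2 - sb ^+ 2) * a ^+ 2 =
    (sa * b - sb * a) * (sa * b + sb * a) + sa ^+ 2 * (a ^+ 2 - b ^+ 2) by ring.
rewrite hV hQ mul0r mulr0 addr0 => /eqP.
by rewrite mulf_eq0 sqrf_eq0 (negPf a_neq0) orbF => /eqP.
Qed.

Lemma chebQ_tV_neq0 (C : numClosedFieldType) m n (r : C) :
  chebQ m r = 0 -> exists x, chebQ n (tV m x 0 r) != 0.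
Proof.
move=> hQ; have [a_neq0 b_neq0] := chebQ_eq0_chebS_neq0 hQ.
set a := chebS m r in a_neq0 *; set b := chebS (m - 1) r in b_neq0 *.
set c := - r * (a ^+ 2 + b ^+ 2) + 4%:R * a * b.
have ab_neq0 : a * b != 0 by rewrite mulf_neq0.
set x := sqrtC ((c - 2%:R) / (a * b)).
have tV_x : tV m x 0 r = - (x ^+ 2 * (a * b)) + c by rewrite /tV -/a -/b /c; ring.
exists x; suff -> : tV m x 0 r = 2%:R by exact: chebQ_two_neq0.
by rewrite tV_x sqrtCK divfK // opprB subrK.
Qed.

Section Eval2.
Variables (R : comNzRingType) (a b : R).
Let eval2_rmorph : {rmorphism {poly {poly R}} -> R} := horner_eval a \o horner_eval b%:P.

Lemma eval2_chebQ j p : eval2 (chebQ j p) a b = chebQ j (eval2 p a b).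
Proof. exact: (rmorph_chebQ eval2_rmorph). Qed.

Lemma eval2_tV m x y z :
  eval2 (tV m x y z) a b = tV m (eval2 x a b) (eval2 y a b) (eval2 z a b).
Proof. exact: (rmorph_tV eval2_rmorph). Qed.

Lemma eval2_prod (I : Type) (s : seq I) (F : I -> {poly {poly R}}) :
  eval2 (\prod_(i <- s) F i) a b = \prod_(i <- s) eval2 (F i) a b.
Proof. exact: (rmorph_prod eval2_rmorph). Qed.

End Eval2.

Lemma eval2_mapC (R : comNzRingType) (q : {poly R}) a b : eval2 q^:P a b = q.[b].
Proof. by rewrite /eval2 horner_map /= hornerC. Qed.

Lemma dim_le1_fibred (C : closedFieldType) (A : C -> C -> C -> Prop)
    (q : {poly C}) (P : C -> {poly {poly C}}) :
  q != 0 -> (forall r, root q r -> P r != 0) ->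
  (forall x y z, A x y z -> root q z /\ eval2 (P z) x y = 0) ->
  dim_le1 A.
Proof.
move=> q_neq0 P_neq0 hA.
have [rs q_split] := closed_field_poly_normal q.
have root_q z : root q z = (z \in rs).
  by rewrite q_split rootZ ?lead_coef_eq0 // root_prod_XsubC.
have qC_neq0 : q^:P != 0 by rewrite map_polyC_eq0.
have qC_vanish a b c : A a b c -> eval2 q^:P a c = 0 /\ eval2 q^:P b c = 0.
  by move=> /hA[/eqP qc _]; rewrite !eval2_mapC.
split; last split.
- exists (\prod_(r <- rs) P r); split.
    by rewrite prodf_seq_neq0; apply/allP => r; rewrite -root_q => /P_neq0.
  move=> x y z /hA[qz Pz]; rewrite eval2_prod; apply/eqP.
  by rewrite prodf_seq_eq0; apply/hasP; exists z; rewrite -?root_q //= Pz.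
- by exists q^:P; split => // x y z /qC_vanish[].
- by exists q^:P; split => // x y z /qC_vanish[].
Qed.

Theorem lemma4p3 (C : numClosedFieldType) (m n : int) :
  dim_le1 (fun x y z : C =>
    Vkl m n x y z /\ chebS m z ^+ 2 - chebS (m - 1) z ^+ 2 = 0).
Proof.
pose P r : {poly {poly C}} := chebQ n (tV m ('X : {poly C})%:P 'X r%:P%:P).
have eval2_P r x y : eval2 (P r) x y = chebQ n (tV m x y r).
  by rewrite eval2_chebQ eval2_tV /eval2 !hornerE.
have root_chebQ (z : C) : root (chebQ m 'X) z = (chebQ m z == 0).
  by rewrite rootE horner_chebQ.
apply: (@dim_le1_fibred _ _ (chebQ m 'X) P).
- by apply: contraNneq (@chebQ_two_neq0 C m) => q0; rewrite -horner_chebQ q0 horner0.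
- move=> r; rewrite root_chebQ => /eqP /(chebQ_tV_neq0 n)[x].
  by apply: contraNneq => P0; rewrite -eval2_P P0 /eval2 !horner0.
- move=> x y z [hV hQ]; rewrite root_chebQ eval2_P.
  by split; [apply/eqP | exact: Vkl_chebQ].
Qed.
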